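(* For every Motzkin tree $T$, $\mathrm{ucs1}(T)$ holds if and only if $\mathrm{is\_ucs}(T)$ holds.
   Context: Motzkin trees are the terms generated by a leaf $v$, a unary constructor $l$ and a binary constructor $a$. $\mathrm{ucs1}(T)$ holds iff, for every leaf of $T$, the number of unary nodes on the path from the root of $T$ to that leaf (counted starting from $0$) equals $1$. For a Boolean $b$, the predicate $\mathrm{is\_ucs\_aux}(T,b)$ is defined recursively with a Boolean flag recording whether a unary node has already been met: - $\mathrm{is\_ucs\_aux}(v,b)$ iff $b$ is true; - $\mathrm{is\_ucs\_aux}(l(T),b)$ iff $b$ is false and $\mathrm{is\_ucs\_aux}(T,\mathrm{true})$; - $\mathrm{is\_ucs\_aux}(a(T_1,T_2),b)$ iff $\mathrm{is\_ucs\_aux}(T_1,b)$ and $\mathrm{is\_ucs\_aux}(T_2,b)$. Finally, $\mathrm{is\_ucs}(T) := \mathrm{is\_ucs\_aux}(T,\mathrm{false})$. *)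

From Stdlib Require Import Arith List.

Inductive motzkin : Type :=
| v : motzkin
| l : motzkin -> motzkin
| a : motzkin -> motzkin -> motzkin.

Inductive leaf_ucount : motzkin -> nat -> Prop :=
| lu_v : leaf_ucount v 0
| lu_l : forall T n, leaf_ucount T n -> leaf_ucount (l T) (S n)
| lu_a1 : forall T1 T2 n, leaf_ucount T1 n -> leaf_ucount (a T1 T2) n
| lu_a2 : forall T1 T2 n, leaf_ucount T2 n -> leaf_ucount (a T1 T2) n.

Definition ucs1 (T : motzkin) : Prop :=
  forall n, leaf_ucount T n -> n = 1.

Fixpoint is_ucs_aux (T : motzkin) (b : bool) : Prop :=
  match T with
  | v => b = true
  | l T' => b = false /\ is_ucs_aux T' true
  | a T1 T2 => is_ucs_aux T1 b /\ is_ucs_aux T2 b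
  end.

Definition is_ucs (T : motzkin) : Prop := is_ucs_aux T false.

(* The flag of [is_ucs_aux T b] records whether one unary node has already
   been met above T, so [is_ucs_aux T b] says that every leaf of T is reached
   through exactly [1 - b] further unary nodes. Stated for an arbitrary flag,
   this characterization follows by structural induction; [ucs1] is its
   instance at [b = false]. *)
From Stdlib Require Import Arith Lia.

Lemma leaf_ucount_exists (T : motzkin) : exists n, leaf_ucount T n.
Proof.
  induction T as [| T [n Hn] | T1 [n Hn] T2 _].
  - exists 0; constructor.
  - exists (S n); constructor; assumption.
  - exists n; apply lu_a1; assumption.
Qed.

Lemma is_ucs_aux_leaf_ucount (T : motzkin) (b : bool) (n : nat) :
  is_ucs_aux T b -> leaf_ucount T n -> n + Nat.b2n b = 1.
Proof.
  intros Hucs Hn; revert b Hucs.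
  induction Hn as [| T n _ IH | T1 T2 n _ IH | T1 T2 n _ IH]; simpl; intros b Hucs.
  - subst b; reflexivity.
  - destruct Hucs as [-> HT]; specialize (IH true HT); simpl in *; lia.
  - apply IH, Hucs.
  - apply IH, Hucs.
Qed.

Lemma leaf_ucount_is_ucs_aux (T : motzkin) (b : bool) :
  (forall n, leaf_ucount T n -> n + Nat.b2n b = 1) -> is_ucs_aux T b.
Proof.
  revert b; induction T as [| T IH | T1 IH1 T2 IH2]; simpl; intros b Hleaves.
  - specialize (Hleaves 0 lu_v); destruct b; simpl in Hleaves; congruence.
  - destruct (leaf_ucount_exists T) as [m Hm].
    assert (Hb : b = false).
    { specialize (Hleaves _ (lu_l _ _ Hm)); destruct b; simpl in Hleaves; [lia | reflexivity]. }
    subst b; split; [reflexivity |].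
    apply IH; intros n Hn; specialize (Hleaves _ (lu_l _ _ Hn)); simpl in *; lia.
  - split; [apply IH1 | apply IH2]; intros n Hn; apply Hleaves;
      [apply lu_a1 | apply lu_a2]; assumption.
Qed.

Lemma is_ucs_aux_iff (T : motzkin) (b : bool) :
  is_ucs_aux T b <-> forall n, leaf_ucount T n -> n + Nat.b2n b = 1.
Proof.
  split.
  - intros Hucs n; apply is_ucs_aux_leaf_ucount, Hucs.
  - apply leaf_ucount_is_ucs_aux.
Qed.

Theorem mainTheorem6 : forall T : motzkin, ucs1 T <-> is_ucs T.
Proof.
  intros T; unfold ucs1, is_ucs; rewrite is_ucs_aux_iff; simpl.
  split; intros H n Hn; specialize (H n Hn); lia.
Qed.
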